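(* Let $\phi$ be the standard normal density, $\gamma(u)=\frac12e^{-|u|}$ the Laplace density, and $g=\phi*\gamma$. For $\alpha\in[0,1]$ and $x\in\mathbb{R}$, let $a(x)=\frac{\alpha g(x)}{(1-\alpha)\phi(x)+\alpha g(x)}$, $\gamma_x(u)=\phi(x-u)\gamma(u)/g(x)$, and let $\pi_\alpha(\cdot\mid x)=(1-a(x))\delta_0+a(x)\gamma_x(u)\,du$. Set $r_2(\alpha,0,x)=\int u^2\,d\pi_\alpha(u\mid x)$. Then there exists $C_0>0$ such that for all $x\in\mathbb{R}$ and all $\alpha\in[0,1]$, $r_2(\alpha,0,x)\ge C_0\alpha$.
   Context: $\pi_\alpha(\cdot\mid x)$ is the posterior distribution of a single coordinate $\theta$ given observation $x\sim\mathcal{N}(\theta,1)$ under the spike and slab prior $(1-\alpha)\delta_0+\alpha\,\mathrm{Lap}(1)$. *)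

From HB Require Import structures.
From mathcomp Require Import all_boot all_order all_algebra.
From mathcomp Require Import all_classical all_reals all_analysis.
Set Implicit Arguments. Unset Strict Implicit. Unset Printing Implicit Defensive.
Import Order.TTheory GRing.Theory Num.Theory.
Local Open Scope classical_set_scope.
Local Open Scope ring_scope.

Section Defs.
Variable R : realType.

Definition phi (x : R) : R := expR (- (x ^+ 2) / 2) / Num.sqrt (2 * pi).

Definition gam (u : R) : R := expR (- `|u|) / 2.

Definition g (x : R) : R :=
  Rintegral (@lebesgue_measure R) setT (fun u => phi (x - u) * gam u).

Definition a (alpha x : R) : R :=
  alpha * g x / ((1 - alpha) * phi x + alpha * g x).

Definition gam_x (x u : R) : R := phi (x - u) * gam u / g x.

(* r_2(alpha,0,x) = \int u^2 dpi_alpha(u|x)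
   = (1 - a x) * 0^2 + a x * \int u^2 gamma_x(u) du   (extended-real valued) *)
Definition r2 (alpha x : R) : \bar R :=
  ((1 - a alpha x) * 0 ^+ 2)%:E +
  (a alpha x)%:E * (\int[@lebesgue_measure R]_(u in setT) (u ^+ 2 * gam_x x u)%:E)%E.

End Defs.

From HB Require Import structures.
From mathcomp Require Import all_boot all_order all_algebra.
From mathcomp Require Import all_classical all_reals all_analysis.
From mathcomp Require Import ring lra measurable_realfun.
Import Order.TTheory GRing.Theory Num.Theory.
Local Open Scope classical_set_scope.
Local Open Scope ring_scope.

(* The slab joint density phi (x - u) * gam u has exact order e^{-|x|}.  From above,
   phi v <= e * e^{-v^2/8} * e^{-|v|} / sqrt(2 pi) and e^{-|x-u|} e^{-|u|} <= e^{-|x|}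
   bound it by e^{-|x|} times a N(x, 4) density, so g x = O(e^{-|x|}); as also
   phi x = O(e^{-|x|}), the marginal (1 - alpha) phi x + alpha g x is at most M e^{-|x|}.
   From below, it is at least c e^{-|x|} on a unit interval beyond x on the side away
   from 0, where moreover u^2 >= 1.  Since
   r2 = alpha * \int u^2 phi (x - u) gam u du / marginal, this gives r2 >= alpha c / M. *)

Lemma le_integral_lbound (R : realType) d (T : measurableType d)
    (mu : {measure set T -> \bar R}) (A : set T) (F : T -> R) (L : R) :
  measurable A -> measurable_fun setT F -> (forall t, 0 <= F t) -> 0 <= L ->
  (forall t, A t -> L <= F t) ->
  (L%:E * mu A <= \int[mu]_(t in setT) (F t)%:E)%E.
Proof.
move=> mA mF F0 L0 FL.
have mFE : measurable_fun [set: T] (EFin \o F) by exact/measurable_EFinP.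
apply: (@le_trans _ _ (\int[mu]_(t in A) (F t)%:E)%E).
  rewrite -(integral_cst mu mA); apply: ge0_le_integral => //.
  exact: measurable_funTS.
by apply: ge0_subset_integral => // t _; rewrite lee_fin.
Qed.

Section SpikeAndSlab.
Context {R : realType}.
Implicit Types x u v alpha : R.

Lemma sqrt2pi_gt0 : 0 < Num.sqrt (2 * pi) :> R.
Proof. by rewrite sqrtr_gt0 mulr_gt0 ?pi_gt0. Qed.

Lemma phi_gt0 v : 0 < phi v.
Proof. by rewrite divr_gt0 ?expR_gt0 ?sqrt2pi_gt0. Qed.

Lemma gam_gt0 u : 0 < gam u.
Proof. by rewrite divr_gt0 ?expR_gt0. Qed.

Lemma phi_le v :
  phi v <= expR 1 * expR (- v ^+ 2 / 8) * expR (- `|v|) / Num.sqrt (2 * pi).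
Proof.
rewrite ler_pM2r ?invr_gt0 ?sqrt2pi_gt0 // -!expRD ler_expR -(real_normK (num_real v)).
have := normr_ge0 v; move: `|v| => t t0.
have := sqr_ge0 (t - 4 / 3); nra.
Qed.

Lemma phi_le_expNnorm v : phi v <= expR 1 / Num.sqrt (2 * pi) * expR (- `|v|).
Proof.
apply: le_trans (phi_le v) _; rewrite mulrAC ler_pM2r ?expR_gt0 //.
rewrite ler_pM2r ?invr_gt0 ?sqrt2pi_gt0 // ler_piMr ?expR_ge0 // expR_le1.
by rewrite mulNr oppr_le0 divr_ge0 ?sqr_ge0.
Qed.

Definition slab x u := phi (x - u) * gam u.

Lemma slab_gt0 x u : 0 < slab x u.
Proof. by rewrite mulr_gt0 ?phi_gt0 ?gam_gt0. Qed.

Lemma measurable_slab x : measurable_fun setT (slab x).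
Proof.
apply: measurable_funM; apply: measurable_funM => //; apply: measurableT_comp => //.
- apply: measurable_funM => //; apply: measurableT_comp => //.
  by apply: measurable_funX; apply: measurable_funB.
- by apply: measurableT_comp => //; exact: normr_measurable.
Qed.

Definition slab_ub : R := expR 1 / (2 * Num.sqrt (2 * pi) * normal_peak 2).

Lemma slab_le_normal_pdf x u :
  slab x u <= slab_ub * expR (- `|x|) * normal_pdf x 2 u.
Proof.
have s0 := sqrt2pi_gt0; have p0 : 0 < normal_peak (2 : R) by rewrite normal_peak_gt0.
have tri : expR (- `|x - u|) * expR (- `|u|) <= expR (- `|x|).
  rewrite -expRD ler_expR lerNr opprD !opprK.
  by have := ler_normD (x - u) u; rewrite subrK.
apply: le_trans (ler_wpM2r (ltW (gam_gt0 u)) (phi_le (x - u))) _.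
rewrite normal_pdfE ?pnatr_eq0 //= /normal_fun /gam.
have -> : (u - x) ^+ 2 = (x - u) ^+ 2 by rewrite -sqrrN opprB.
have -> : 2 ^+ 2 *+ 2 = 8 :> R by rewrite -mulr_natr -natrX -natrM.
set c := expR 1 * expR (- (x - u) ^+ 2 / 8) / (2 * Num.sqrt (2 * pi)).
have c0 : 0 <= c by rewrite divr_ge0 ?mulr_ge0 ?expR_ge0 // ltW ?mulr_gt0.
rewrite [leLHS](_ : _ = c * (expR (- `|x - u|) * expR (- `|u|))); last first.
  by rewrite /c; field; rewrite gt_eqF.
rewrite [leRHS](_ : _ = c * expR (- `|x|)); last first.
  by rewrite /c /slab_ub; field; rewrite !gt_eqF.
exact: ler_wpM2l.
Qed.

Lemma slab_ub_gt0 : 0 < slab_ub.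
Proof. by rewrite divr_gt0 ?expR_gt0 // !mulr_gt0 ?sqrt2pi_gt0 ?normal_peak_gt0. Qed.

Lemma integral_slab_le x :
  (\int[lebesgue_measure]_(u in setT) (slab x u)%:E
     <= (slab_ub * expR (- `|x|))%:E)%E.
Proof.
have c0 : 0 <= slab_ub * expR (- `|x|) by rewrite mulr_ge0 ?expR_ge0 ?ltW ?slab_ub_gt0.
rewrite -[leRHS]mule1 -(integral_normal_pdf x 2) -ge0_integralZl //; last first.
- by move=> u _; rewrite lee_fin normal_pdf_ge0.
- by apply/measurable_EFinP; exact: measurable_normal_pdf.
apply: ge0_le_integral => //.
- by move=> u _; rewrite lee_fin ltW ?slab_gt0.
- by apply/measurable_EFinP; exact: measurable_slab.
- by apply/measurable_EFinP/measurable_funM => //; exact: measurable_normal_pdf.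
- by move=> u _; rewrite -EFinM lee_fin slab_le_normal_pdf.
Qed.

Definition far_itv x : interval R :=
  if 0 <= x then `[x + 1, x + 2] else `[x - 2, x - 1].

Lemma lebesgue_far_itv x : lebesgue_measure [set` far_itv x] = 1%E.
Proof.
rewrite /far_itv; case: ifP => _;
  by rewrite lebesgue_measure_itv /= lte_fin ifT -?EFinD; do ?congr EFin; lra.
Qed.

Lemma far_itvP x u : u \in far_itv x ->
  [/\ `|x - u| <= 2, 1 <= `|u| & `|u| <= `|x| + 2].
Proof.
rewrite /far_itv; case: ifPn => [x0|]; last rewrite -ltNge => x0; rewrite in_itv /=.
  move=> /andP[? ?]; rewrite (ger0_norm x0) !ler_norml ler_normr.
  by split; [apply/andP; split | apply/orP; left | apply/andP; split]; lra.
move=> /andP[? ?]; rewrite (ltr0_norm x0) !ler_norml ler_normr.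
by split; [apply/andP; split | apply/orP; right | apply/andP; split]; lra.
Qed.

Lemma phi_ge v : `|v| <= 2 -> expR (-2) / Num.sqrt (2 * pi) <= phi v.
Proof.
move=> v2; rewrite ler_pM2r ?invr_gt0 ?sqrt2pi_gt0 // ler_expR.
rewrite -(real_normK (num_real v)); have := normr_ge0 v; nra.
Qed.

Definition slab_lb : R := expR (-4) / (2 * Num.sqrt (2 * pi)).

Lemma slab_lb_gt0 : 0 < slab_lb.
Proof. by rewrite divr_gt0 ?expR_gt0 ?mulr_gt0 ?sqrt2pi_gt0. Qed.

Lemma slab_ge x u : u \in far_itv x -> slab_lb * expR (- `|x|) <= slab x u.
Proof.
case/far_itvP => xu2 _ ux.
have -> : slab_lb * expR (- `|x|) =
          expR (-2) / Num.sqrt (2 * pi) * (expR (- (`|x| + 2)) / 2).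
  rewrite /slab_lb mulrAC mulf_div -!expRD [_ * 2]mulrC; congr (expR _ / _); lra.
apply: ler_pM; first by rewrite divr_ge0 ?expR_ge0 ?ltW ?sqrt2pi_gt0.
- by rewrite divr_ge0 ?expR_ge0.
- exact: phi_ge.
- by rewrite /gam ler_pM2r // ler_expR lerN2.
Qed.

Lemma integral_slab x :
  (\int[lebesgue_measure]_(u in setT) (slab x u)%:E)%E = (g x)%:E.
Proof.
rewrite /g fineK // ge0_fin_numE ?(le_lt_trans (integral_slab_le x)) ?ltry //.
by apply: integral_ge0 => u _; rewrite lee_fin ltW ?slab_gt0.
Qed.

Lemma g_le x : g x <= slab_ub * expR (- `|x|).
Proof. by rewrite -lee_fin -integral_slab integral_slab_le. Qed.

Lemma g_ge x : slab_lb * expR (- `|x|) <= g x.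
Proof.
rewrite -lee_fin -integral_slab -[leLHS]mule1 -(lebesgue_far_itv x).
apply: le_integral_lbound => //.
- exact: measurable_slab.
- by move=> u; rewrite ltW ?slab_gt0.
- by rewrite mulr_ge0 ?expR_ge0 ?ltW ?slab_lb_gt0.
- by move=> u; exact: slab_ge.
Qed.

Lemma g_gt0 x : 0 < g x.
Proof. by apply: lt_le_trans (g_ge x); rewrite mulr_gt0 ?expR_gt0 ?slab_lb_gt0. Qed.

Lemma integral_sqr_gam_x_ge x :
  ((slab_lb * expR (- `|x|) / g x)%:E <=
   \int[lebesgue_measure]_(u in setT) (u ^+ 2 * gam_x x u)%:E)%E.
Proof.
have g0 := g_gt0 x.
rewrite -[leLHS]mule1 -(lebesgue_far_itv x); apply: le_integral_lbound => //.
- apply: measurable_funM; first exact: measurable_funX.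
  by rewrite /gam_x; apply: measurable_funM => //; exact: measurable_slab.
- by move=> u; rewrite mulr_ge0 ?sqr_ge0 ?divr_ge0 ?ltW ?slab_gt0.
- by rewrite divr_ge0 ?(ltW g0) // mulr_ge0 ?expR_ge0 ?ltW ?slab_lb_gt0.
move=> u /= /[dup] /far_itvP[_ u1 _] /slab_ge ge_slab.
rewrite /gam_x -/(slab x u) mulrA ler_pM2r ?invr_gt0 //.
apply: le_trans ge_slab (ler_peMl (ltW (slab_gt0 x u)) _).
by rewrite -(real_normK (num_real u)) exprn_ege1.
Qed.

Definition marginal alpha x := (1 - alpha) * phi x + alpha * g x.

Definition marginal_ub : R := expR 1 / Num.sqrt (2 * pi) + slab_ub.

Lemma marginal_ub_gt0 : 0 < marginal_ub.
Proof. by rewrite addr_gt0 ?slab_ub_gt0 // divr_gt0 ?expR_gt0 ?sqrt2pi_gt0. Qed.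

Lemma marginal_gt0 {alpha} x : 0 <= alpha <= 1 -> 0 < marginal alpha x.
Proof.
move=> /andP[a0 a1]; have := phi_gt0 x; have := g_gt0 x; rewrite /marginal.
move: (phi x) (g x) => p q p0 q0; nra.
Qed.

Lemma marginal_le {alpha} x : 0 <= alpha <= 1 ->
  marginal alpha x <= marginal_ub * expR (- `|x|).
Proof.
move=> /andP[a0 a1]; have := phi_le_expNnorm x; have := g_le x.
have := phi_gt0 x; have := g_gt0 x; rewrite /marginal /marginal_ub mulrDl.
move: (phi x) (g x) => p q p0 q0; nra.
Qed.

Lemma r2_ge {alpha} x : 0 <= alpha <= 1 ->
  ((alpha * (slab_lb * expR (- `|x|)) / marginal alpha x)%:E <= r2 alpha x)%E.
Proof.
move=> a01; have D0 := marginal_gt0 x a01; have g0 := g_gt0 x.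
have a0 : 0 <= a alpha x.
  by case/andP: a01 => a0 _; rewrite /a divr_ge0 ?mulr_ge0 ?(ltW g0) ?(ltW D0).
rewrite /r2 expr0n mulr0 add0e.
apply: le_trans (lee_wpmul2l _ (integral_sqr_gam_x_ge x)); last by rewrite lee_fin.
set L := slab_lb * expR (- `|x|).
rewrite -EFinM (_ : a alpha x * (L / g x) = alpha * L / marginal alpha x) //.
by rewrite /a -/(marginal alpha x); field; rewrite !gt_eqF.
Qed.

End SpikeAndSlab.

Theorem lemma2 (R : realType) :
  exists C0 : R, 0 < C0 /\
    forall (x alpha : R), 0 <= alpha <= 1 ->
      ((C0 * alpha)%:E <= r2 alpha x)%E.
Proof.
exists (slab_lb / marginal_ub).
split; first by rewrite divr_gt0 ?slab_lb_gt0 ?marginal_ub_gt0.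
move=> x alpha a01; apply: le_trans (r2_ge x a01); rewrite lee_fin mulrC -mulrA.
apply: ler_wpM2l; first by case/andP: a01.
rewrite ler_pdivrMr ?marginal_ub_gt0 // mulrAC ler_pdivlMr ?(marginal_gt0 x a01) //.
by rewrite -[leRHS]mulrA ler_pM2l ?slab_lb_gt0 // mulrC marginal_le.
Qed.
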